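(* Let $\epsilon\in(0,1)$, $u_0\in\mathbb{R}$, $h>0$, and let $(u_n)_{n\ge0}$ be a sequence of real numbers starting at $u_0$ and satisfying the modified Crank–Nicolson scheme $$\frac{u_n-u_{n-1}}{h}+\frac{1}{\epsilon^2}\,\frac{u_n+u_{n-1}}{2}\left(\frac{u_n^2+u_{n-1}^2}{2}-1\right)=0,\qquad n\ge1.$$ (i) If $u_0\in\{0,1,-1\}$ and $h\le2\epsilon^2$, then $u_n=\mathrm{sign}(u_0)$ for all $n\ge1$. (ii) If $u_0\notin\{0,1,-1\}$, define $h^*=h^*(u_0,\epsilon)=\frac{4\epsilon^2}{u_0^2+2|u_0|+1}$ if $|u_0|>1$ and $h^*=\epsilon^2$ if $0<|u_0|<1$. Then $h^*>0$ and for every $h\in(0,h^*]$ the sequence $(u_n)$ is monotone and converges to $\mathrm{sign}(u_0)$ as $n\to\infty$.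
   Context: The scheme discretizes the ODE $u'(t)+\frac{1}{\epsilon^2}(u^3-u)=0$, $u(0)=u_0$; equivalently the nonlinear term is $\frac{F(u_n)-F(u_{n-1})}{u_n-u_{n-1}}$ with $F(u)=\frac14(u^2-1)^2$. For $h\le2\epsilon^2$ each step equation has a unique real solution. Here $\mathrm{sign}(0)=0$. *)

From Stdlib Require Import Reals Lra.
Open Scope R_scope.

Definition sgn (x : R) : R :=
  if Rlt_dec 0 x then 1 else if Rlt_dec x 0 then -1 else 0.

(* the modified Crank--Nicolson step relation between u_{n-1} = a and u_n = b *)
Definition mcn_step (eps h a b : R) : Prop :=
  (b - a) / h + / (eps ^ 2) * ((b + a) / 2) * ((b ^ 2 + a ^ 2) / 2 - 1) = 0.

(* threshold h^*(u0, eps); only meaningful for u0 not in {0,1,-1} *)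
Definition hstar (u0 eps : R) : R :=
  if Rlt_dec 1 (Rabs u0) then 4 * eps ^ 2 / (u0 ^ 2 + 2 * Rabs u0 + 1)
  else eps ^ 2.

Definition monotone_seq (u : nat -> R) : Prop :=
  (forall n, u n <= u (S n)) \/ (forall n, u (S n) <= u n).

(* Clearing denominators, a step from a to b reads
   4 eps^2 (b - a) + h (b + a) (b^2 + a^2 - 2) = 0, which factors in two ways:
     (b - a) (4 eps^2 + h ((b + a)^2 + 2 a^2 - 2)) = 4 h a (1 - a^2),
     (b - 1) (4 eps^2 + h (b^2 + (a + 1) b + a^2 + a - 1)) = (a - 1) (4 eps^2 - h (a + 1)^2).  For 0 < u0 and
   h <= h*, all brackets have a fixed sign on the interval between u0 and 1, so the
   first identity makes the iterates move towards 1, the second shows they never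
   cross it and that the error |u_n - 1| shrinks by a fixed factor < 1 at each step.
   The scheme is odd in u, which reduces u0 < 0 to u0 > 0. *)

From Stdlib Require Import Reals Lra Lia Psatz.
Open Scope R_scope.

Lemma Un_cv_contraction (u : nat -> R) (L c : R) :
  0 <= c < 1 -> (forall n, Rabs (u (S n) - L) <= c * Rabs (u n - L)) -> Un_cv u L.
Proof.
  intros [Hc0 Hc1] Hcontr.
  set (K := Rabs (u 0%nat - L) + 1).
  assert (HK : 0 < K) by (pose proof (Rabs_pos (u 0%nat - L)); unfold K; lra).
  assert (Hbound : forall n, Rabs (u n - L) <= c ^ n * K).
  { induction n as [|n IH]; simpl; unfold K in *; [lra|].
    eapply Rle_trans; [apply Hcontr|].
    rewrite Rmult_assoc. apply Rmult_le_compat_l; lra. }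
  intros e He.
  assert (Hc : Rabs c < 1) by (rewrite Rabs_right; lra).
  assert (HeK : 0 < e / K) by (apply Rdiv_lt_0_compat; lra).
  destruct (pow_lt_1_zero c Hc (e / K) HeK) as [N HN].
  exists N. intros n Hn. unfold Rdist.
  specialize (HN n Hn). rewrite Rabs_right in HN by (apply Rle_ge, pow_le; lra).
  apply (Rmult_lt_compat_r K) in HN; [|lra].
  replace (e / K * K) with e in HN by (field; lra).
  pose proof (Hbound n). lra.
Qed.

Lemma Un_cv_opp (u : nat -> R) (l : R) : Un_cv (fun n => - u n) l -> Un_cv u (- l).
Proof.
  intros Hcv. apply Un_cv_ext with (opp_seq (fun n => - u n)).
  - intro n. unfold opp_seq. ring.
  - apply CV_opp. exact Hcv.
Qed.

Lemma monotone_seq_opp (u : nat -> R) : monotone_seq (fun n => - u n) -> monotone_seq u.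
Proof.
  intros [Hinc | Hdec]; [right | left]; intro n; [specialize (Hinc n) | specialize (Hdec n)]; lra.
Qed.

Lemma sgn_pos x : 0 < x -> sgn x = 1.
Proof. unfold sgn. destruct (Rlt_dec 0 x); lra. Qed.

Lemma sgn_neg x : x < 0 -> sgn x = -1.
Proof. unfold sgn. destruct (Rlt_dec 0 x); destruct (Rlt_dec x 0); lra. Qed.

Lemma sgn_equilibrium x : x = 0 \/ x = 1 \/ x = -1 -> sgn x = x.
Proof. unfold sgn. intros Hx. destruct (Rlt_dec 0 x); destruct (Rlt_dec x 0); lra. Qed.

Lemma hstar_pos u0 eps : eps <> 0 -> 0 < hstar u0 eps.
Proof.
  intros Heps. assert (0 < eps ^ 2) by (rewrite <- Rsqr_pow2; apply Rsqr_pos_lt; exact Heps).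
  unfold hstar. destruct (Rlt_dec 1 (Rabs u0)); [|assumption].
  apply Rdiv_lt_0_compat; [lra|]. pose proof (Rabs_pos u0). nra.
Qed.

Lemma hstar_Ropp u0 eps : hstar (- u0) eps = hstar u0 eps.
Proof. unfold hstar. rewrite Rabs_Ropp. replace ((- u0) ^ 2) with (u0 ^ 2) by ring. reflexivity. Qed.

Lemma hstar_above_one u0 eps : eps <> 0 -> 1 < Rabs u0 ->
  hstar u0 eps * (Rabs u0 + 1) ^ 2 = 4 * eps ^ 2.
Proof.
  intros Heps Hu0. unfold hstar. destruct (Rlt_dec 1 (Rabs u0)); [|lra].
  rewrite <- (pow2_abs u0). field. nra.
Qed.

Lemma hstar_below_one u0 eps : Rabs u0 <= 1 -> hstar u0 eps = eps ^ 2.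
Proof. intros Hu0. unfold hstar. destruct (Rlt_dec 1 (Rabs u0)); [lra|reflexivity]. Qed.

Definition mcn_step_cleared (E h a b : R) : Prop :=
  4 * E * (b - a) + h * ((b + a) * (b ^ 2 + a ^ 2 - 2)) = 0.

Lemma mcn_step_clear eps h a b :
  eps <> 0 -> h <> 0 -> mcn_step eps h a b -> mcn_step_cleared (eps ^ 2) h a b.
Proof.
  unfold mcn_step, mcn_step_cleared. intros Heps Hh Hstep.
  assert (Hpow : eps ^ 2 <> 0) by (apply pow_nonzero; exact Heps).
  rewrite <- (Rmult_0_r (4 * eps ^ 2 * h)), <- Hstep. field. auto.
Qed.

Lemma mcn_step_cleared_opp E h a b :
  mcn_step_cleared E h a b -> mcn_step_cleared E h (- a) (- b).
Proof. unfold mcn_step_cleared. intros Hstep. lra. Qed.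

Section OneStep.

Variables E h a b : R.
Hypothesis HE : 0 < E.
Hypothesis Hh : 0 < h.
Hypothesis Hstep : mcn_step_cleared E h a b.

Lemma step_increment_factor :
  (b - a) * (4 * E + h * ((b + a) ^ 2 + 2 * a ^ 2 - 2)) = 4 * h * a * (1 - a ^ 2).
Proof. unfold mcn_step_cleared in Hstep. lra. Qed.

Lemma step_error_factor :
  (b - 1) * (4 * E + h * (b ^ 2 + (a + 1) * b + a ^ 2 + a - 1))
  = (a - 1) * (4 * E - h * (a + 1) ^ 2).
Proof. unfold mcn_step_cleared in Hstep. lra. Qed.

Lemma step_equilibrium : h <= 2 * E -> a = 0 \/ a = 1 \/ a = -1 -> b = a.
Proof.
  unfold mcn_step_cleared in Hstep.
  intros H2E [Ha | [Ha | Ha]]; rewrite Ha in Hstep |- *.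
  - assert (F : b * (4 * E - 2 * h + h * b ^ 2) = 0) by lra.
    destruct (Rmult_integral _ _ F) as [|F']; [assumption|].
    destruct (Req_dec b 0) as [|Hb]; [assumption|].
    pose proof (Rsqr_pos_lt b Hb). unfold Rsqr in *. nra.
  - assert (F : (b - 1) * (4 * E + h * (b + 1) ^ 2) = 0) by lra.
    destruct (Rmult_integral _ _ F) as [|F']; [lra|].
    pose proof (Rmult_le_pos _ _ (Rlt_le _ _ Hh) (pow2_ge_0 (b + 1))). lra.
  - assert (F : (b + 1) * (4 * E + h * (b - 1) ^ 2) = 0) by lra.
    destruct (Rmult_integral _ _ F) as [|F']; [lra|].
    pose proof (Rmult_le_pos _ _ (Rlt_le _ _ Hh) (pow2_ge_0 (b - 1))). lra.
Qed.

Lemma step_below_one (c : R) : h <= E -> 0 < c <= a -> a < 1 ->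
  a < b < 1 /\ 1 - b <= (1 - h * c / (2 * E)) * (1 - a).
Proof.
  intros HhE [Hc Hca] Ha1.
  pose proof step_increment_factor as F1. pose proof step_error_factor as F2.
  set (q := b ^ 2 + (a + 1) * b + a ^ 2 + a - 1) in F2.
  assert (Hab : a < b).
  { assert (0 <= h * ((b + a) ^ 2 + 2 * a ^ 2)).
    { apply Rmult_le_pos; [lra|]. pose proof (pow2_ge_0 (b + a)). pose proof (pow2_ge_0 a). lra. }
    assert (0 < 4 * h * a * (1 - a ^ 2)) by (apply Rmult_lt_0_compat; nra).
    nra. }
  assert (HR : 0 < 4 * E + h * q).
  { assert (-1 < q) by (unfold q; nra). nra. }
  assert (HN : 0 < 4 * E - h * (a + 1) ^ 2).
  { assert ((a + 1) ^ 2 < 4) by nra. nra. }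
  assert (Hb1 : b < 1).
  { assert ((a - 1) * (4 * E - h * (a + 1) ^ 2) < 0) by (apply Rmult_neg_pos; lra). nra. }
  split; [lra|].
  assert (Hq : 3 * a ^ 2 + 2 * a - 1 <= q) by (unfold q; nra).
  (* By [step_error_factor], (1 - b) / (1 - a) = (4E - h (a + 1)^2) / (4E + h q). *)
  assert (Hkey : 2 * E * (4 * E - h * (a + 1) ^ 2) <= (2 * E - h * c) * (4 * E + h * q)).
  { assert ((2 * E - h * c) * (4 * E + h * (3 * a ^ 2 + 2 * a - 1))
            <= (2 * E - h * c) * (4 * E + h * q)).
    { apply Rmult_le_compat_l; nra. }
    assert (h * c * h * (3 * a ^ 2 + 2 * a - 1) <= h * c * h * 4)
      by (apply Rmult_le_compat_l; nra).
    assert (h * c * h <= h * c * E) by (apply Rmult_le_compat_l; nra).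
    assert (E * h * c <= E * h * a) by (apply Rmult_le_compat_l; nra).
    assert (0 <= E * h * a ^ 2) by (apply Rmult_le_pos; nra).
    lra. }
  apply (Rmult_le_reg_l (2 * E * (4 * E + h * q))); [nra|].
  replace (2 * E * (4 * E + h * q) * ((1 - h * c / (2 * E)) * (1 - a)))
    with ((1 - a) * ((2 * E - h * c) * (4 * E + h * q))) by (field; lra).
  replace (2 * E * (4 * E + h * q) * (1 - b))
    with ((1 - a) * (2 * E * (4 * E - h * (a + 1) ^ 2))) by nra.
  apply Rmult_le_compat_l; lra.
Qed.

Lemma step_above_one (c : R) : h * (c + 1) ^ 2 <= 4 * E -> 1 <= a <= c ->
  1 <= b <= a /\ b - 1 <= (1 - h / E) * (a - 1).
Proof.
  intros HhE [Ha1 Hac].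
  pose proof step_increment_factor as F1. pose proof step_error_factor as F2.
  set (q := b ^ 2 + (a + 1) * b + a ^ 2 + a - 1) in F2.
  assert (Hba : b <= a).
  { assert (0 < 4 * E + h * ((b + a) ^ 2 + 2 * a ^ 2 - 2)).
    { assert (0 <= h * ((b + a) ^ 2 + 2 * a ^ 2 - 2)).
      { apply Rmult_le_pos; [lra|]. pose proof (pow2_ge_0 (b + a)). nra. }
      lra. }
    assert (4 * h * a * (1 - a ^ 2) <= 0).
    { assert (0 <= 4 * h * a) by nra. assert (1 - a ^ 2 <= 0) by nra. nra. }
    nra. }
  assert (Hq : 0 <= q).
  { assert (4 * q = (2 * b + a + 1) ^ 2 + (3 * a + 5) * (a - 1)) by (unfold q; ring).
    pose proof (pow2_ge_0 (2 * b + a + 1)). nra. }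
  assert (HN : 4 * E - h * (a + 1) ^ 2 <= 4 * E - 4 * h).
  { assert (4 <= (a + 1) ^ 2) by nra. nra. }
  assert (HN0 : 0 <= 4 * E - h * (a + 1) ^ 2).
  { assert ((a + 1) ^ 2 <= (c + 1) ^ 2) by nra. nra. }
  assert (Hhq : 0 <= h * q) by (apply Rmult_le_pos; lra).
  assert (Hb1 : 1 <= b).
  { assert (0 <= (a - 1) * (4 * E - h * (a + 1) ^ 2)) by (apply Rmult_le_pos; lra).
    nra. }
  split; [lra|].
  apply (Rmult_le_reg_l (4 * E)); [lra|].
  replace (4 * E * ((1 - h / E) * (a - 1))) with ((a - 1) * (4 * E - 4 * h)) by (field; lra).
  assert ((b - 1) * (4 * E) <= (b - 1) * (4 * E + h * q))
    by (apply Rmult_le_compat_l; lra).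
  assert ((a - 1) * (4 * E - h * (a + 1) ^ 2) <= (a - 1) * (4 * E - 4 * h))
    by (apply Rmult_le_compat_l; lra).
  lra.
Qed.

End OneStep.

Section Sequence.

Variables E h : R.
Variable u : nat -> R.
Hypothesis HE : 0 < E.
Hypothesis Hh : 0 < h.
Hypothesis Hscheme : forall n, mcn_step_cleared E h (u n) (u (S n)).

Lemma seq_constant_at_equilibrium : h <= 2 * E ->
  u 0%nat = 0 \/ u 0%nat = 1 \/ u 0%nat = -1 -> forall n, u n = u 0%nat.
Proof.
  intros H2E Hu0. induction n as [|n IH]; [reflexivity|].
  rewrite <- IH. apply (step_equilibrium E h); auto. rewrite IH. exact Hu0.
Qed.

Lemma seq_increasing_to_one : 0 < u 0%nat < 1 -> h <= E ->
  (forall n, u n <= u (S n)) /\ Un_cv u 1.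
Proof.
  intros [Hpos Hlt1] HhE.
  set (k := 1 - h * u 0%nat / (2 * E)).
  pose proof (fun n Hn => step_below_one E h (u n) (u (S n)) HE Hh (Hscheme n) (u 0%nat) HhE Hn)
    as Hstep.
  assert (Hinv : forall n, u 0%nat <= u n < 1).
  { induction n as [|n IH]; [lra|].
    destruct (Hstep n ltac:(lra) ltac:(lra)) as [Hn _]. lra. }
  assert (Hmove : forall n,
    u n < u (S n) < 1 /\ 1 - u (S n) <= k * (1 - u n)).
  { intro n. pose proof (Hinv n). apply Hstep; lra. }
  split.
  - intro n. destruct (Hmove n) as [Hn _]. lra.
  - apply (Un_cv_contraction u 1 k).
    + assert (Hk : h * u 0%nat / (2 * E) * (2 * E) = h * u 0%nat) by (field; lra).
      unfold k. assert (0 < h * u 0%nat / (2 * E)) by (apply Rdiv_lt_0_compat; nra).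
      nra.
    + intro n. destruct (Hmove n) as [_ Hcontr].
      pose proof (Hinv n). pose proof (Hinv (S n)).
      rewrite !Rabs_left by lra. lra.
Qed.

Lemma seq_decreasing_to_one : 1 < u 0%nat -> h * (u 0%nat + 1) ^ 2 <= 4 * E ->
  (forall n, u (S n) <= u n) /\ Un_cv u 1.
Proof.
  intros Hgt1 HhE.
  pose proof (fun n Hn => step_above_one E h (u n) (u (S n)) HE Hh (Hscheme n) (u 0%nat) HhE Hn)
    as Hstep.
  assert (Hinv : forall n, 1 <= u n <= u 0%nat).
  { induction n as [|n IH]; [lra|].
    destruct (Hstep n IH) as [Hn _]. lra. }
  split.
  - intro n. destruct (Hstep n (Hinv n)) as [Hn _]. lra.
  - apply (Un_cv_contraction u 1 (1 - h / E)).
    + assert (h < E).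
      { assert (0 < h * ((u 0%nat + 1) ^ 2 - 4)) by (apply Rmult_lt_0_compat; nra). lra. }
      assert (Hk : h / E * E = h) by (field; lra).
      assert (0 < h / E) by (apply Rdiv_lt_0_compat; lra).
      nra.
    + intro n. destruct (Hstep n (Hinv n)) as [_ Hcontr].
      pose proof (Hinv n). pose proof (Hinv (S n)).
      rewrite !Rabs_pos_eq by lra. lra.
Qed.

End Sequence.

Lemma mcn_positive_monotone_cv eps h (u : nat -> R) : eps <> 0 -> 0 < h ->
  (forall n, mcn_step_cleared (eps ^ 2) h (u n) (u (S n))) ->
  0 < u 0%nat -> u 0%nat <> 1 -> h <= hstar (u 0%nat) eps ->
  monotone_seq u /\ Un_cv u 1.
Proof.
  intros Heps Hh Hscheme Hpos Hne1 Hhs.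
  assert (HE : 0 < eps ^ 2) by (rewrite <- Rsqr_pow2; apply Rsqr_pos_lt; exact Heps).
  assert (Habs : Rabs (u 0%nat) = u 0%nat) by (apply Rabs_pos_eq; lra).
  destruct (Rlt_le_dec (u 0%nat) 1) as [Hlt1 | Hge1].
  - rewrite hstar_below_one in Hhs by lra.
    destruct (seq_increasing_to_one (eps ^ 2) h u) as [Hinc Hcv]; auto.
    split; [left|]; assumption.
  - assert (Hgt1 : 1 < u 0%nat) by lra.
    pose proof (hstar_above_one (u 0%nat) eps Heps ltac:(lra)) as Hstar.
    rewrite Habs in Hstar.
    assert (Hbound : h * (u 0%nat + 1) ^ 2 <= 4 * eps ^ 2).
    { rewrite <- Hstar. apply Rmult_le_compat_r; [apply pow2_ge_0 | exact Hhs]. }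
    destruct (seq_decreasing_to_one (eps ^ 2) h u) as [Hdec Hcv]; auto.
    split; [right|]; assumption.
Qed.

Lemma mcn_monotone_cv_sgn eps h (u : nat -> R) : eps <> 0 -> 0 < h ->
  (forall n, mcn_step_cleared (eps ^ 2) h (u n) (u (S n))) ->
  u 0%nat <> 0 -> u 0%nat <> 1 -> u 0%nat <> -1 -> h <= hstar (u 0%nat) eps ->
  monotone_seq u /\ Un_cv u (sgn (u 0%nat)).
Proof.
  intros Heps Hh Hscheme Hne0 Hne1 Hnem1 Hhs.
  destruct (Rtotal_order (u 0%nat) 0) as [Hneg | [Hzero | Hpos]]; [|contradiction|].
  - rewrite sgn_neg by exact Hneg.
    destruct (mcn_positive_monotone_cv eps h (fun n => - u n)) as [Hmon Hcv]; auto.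
    + intro n. apply mcn_step_cleared_opp, Hscheme.
    + lra.
    + lra.
    + rewrite hstar_Ropp. exact Hhs.
    + split; [apply monotone_seq_opp | apply Un_cv_opp]; assumption.
  - rewrite sgn_pos by exact Hpos.
    apply (mcn_positive_monotone_cv eps h u); assumption.
Qed.

Theorem theorem3p5 (eps u0 h : R) (u : nat -> R)
  (Heps : 0 < eps < 1) (Hh : 0 < h) (Hu0 : u 0%nat = u0)
  (Hscheme : forall n : nat, (1 <= n)%nat -> mcn_step eps h (u (n - 1)%nat) (u n)) :
  ((u0 = 0 \/ u0 = 1 \/ u0 = -1) -> h <= 2 * eps ^ 2 ->
     forall n : nat, (1 <= n)%nat -> u n = sgn u0)
  /\
  ((u0 <> 0 /\ u0 <> 1 /\ u0 <> -1) ->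
     0 < hstar u0 eps /\
     (h <= hstar u0 eps -> monotone_seq u /\ Un_cv u (sgn u0))).
Proof.
  assert (Hne : eps <> 0) by lra.
  assert (HE : 0 < eps ^ 2) by (apply pow_lt; lra).
  assert (Hcleared : forall n, mcn_step_cleared (eps ^ 2) h (u n) (u (S n))).
  { intro n. apply mcn_step_clear; [exact Hne | lra |].
    replace n with (S n - 1)%nat at 1 by lia. apply Hscheme. lia. }
  subst u0. split.
  - intros Heq H2E n _.
    rewrite (seq_constant_at_equilibrium (eps ^ 2) h u); auto.
    symmetry. apply sgn_equilibrium. exact Heq.
  - intros (Hne0 & Hne1 & Hnem1). split; [apply hstar_pos; exact Hne|].
    apply mcn_monotone_cv_sgn; assumption.
Qed.
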